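(* Let $\alpha\in\mathbb{C}$ and $\beta\in\mathbb{C}\setminus\{q^{-n}:n\in\mathbb{N}_0\}$. Writing $\mathbf{H}_6=\mathbf{H}_6(\alpha;\beta;q,x,y)$ and $P=(1-\beta)(1-\beta q)$: (i) $\mathbf{H}_6(\alpha q;\beta q;q,x,y)=\mathbf{H}_6+\frac{(\alpha-\beta)x(1-\alpha q)}{P}\mathbf{H}_6(\alpha q^2;\beta q^2;q,x,y)+\frac{(\alpha-\beta)y}{P}\mathbf{H}_6(\alpha q;\beta q^2;q,xq,y)+\frac{\alpha xq(1-\alpha q)}{1-\beta q}\mathbf{H}_6(\alpha q^2;\beta q^2;q,xq,yq)$; (ii) $\mathbf{H}_6(\alpha q;\beta q;q,x,y)=\mathbf{H}_6+\frac{\alpha y}{P}\mathbf{H}_6(\alpha q;\beta q^2;q,x,y)+\frac{\alpha xq(1-\alpha q)}{1-\beta q}\mathbf{H}_6(\alpha q^2;\beta q^2;q,xq,yq)+\frac{\alpha x(1-\alpha q)}{P}\mathbf{H}_6(\alpha q^2;\beta q^2;q,x,yq)-\frac{\beta x(1-\alpha q)}{P}\mathbf{H}_6(\alpha q^2;\beta q^2;q,x,y)-\frac{\beta y}{P}\mathbf{H}_6(\alpha q;\beta q^2;q,xq,y)$; (iii) $\mathbf{H}_6(\alpha q;\beta q;q,x,y)=\mathbf{H}_6+\frac{\alpha x(1-\alpha q)}{P}\mathbf{H}_6(\alpha q^2;\beta q^2;q,x,y)+\frac{\alpha y}{P}\mathbf{H}_6(\alpha q;\beta q^2;q,xq,y)+\frac{\alpha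 xq(1-\alpha q)}{1-\beta q}\mathbf{H}_6(\alpha q^2;\beta q^2;q,xq,yq)-\frac{\beta y}{P}\mathbf{H}_6(\alpha q;\beta q^2;q,x,y)-\frac{\beta x(1-\alpha q)}{P}\mathbf{H}_6(\alpha q^2;\beta q^2;q,x,yq)$; (iv) $\mathbf{H}_6(\alpha q;\beta q;q,x,y)=\mathbf{H}_6+\frac{(\alpha-\beta)y}{P}\mathbf{H}_6(\alpha q;\beta q^2;q,x,y)+\frac{(\alpha-\beta)x(1-\alpha q)}{P}\mathbf{H}_6(\alpha q^2;\beta q^2;q,x,yq)+\frac{\alpha xq(1-\alpha q)}{1-\beta q}\mathbf{H}_6(\alpha q^2;\beta q^2;q,xq,yq)$.
   Context: Fix $q\in\mathbb{C}$ with $0<|q|<1$. For $a\in\mathbb{C}$ and $n\in\mathbb{N}_0$, $(a;q)_0=1$, $(a;q)_n=\prod_{k=0}^{n-1}(1-aq^k)$. For $\alpha\in\mathbb{C}$ and $\beta\in\mathbb{C}\setminus\{q^{-n}:n\in\mathbb{N}_0\}$: $\mathbf{H}_6(\alpha;\beta;q,x,y)=\sum_{r,s\ge0}\frac{(\alpha;q)_{2r+s}}{(\beta;q)_{r+s}(q;q)_r(q;q)_s}x^ry^s$. Expressions such as $\mathbf{H}_6(\alpha;\beta;q,xq,yq)$ denote the series with $x,y$ replaced by $qx,qy$. Identities are of formal power series in $x,y$. *)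

From HB Require Import structures.
From mathcomp Require Import all_boot all_order all_algebra.
From mathcomp Require Import complex reals.
Set Implicit Arguments. Unset Strict Implicit. Unset Printing Implicit Defensive.
Import Order.TTheory GRing.Theory Num.Theory.
Local Open Scope ring_scope.

Definition qpoch {C : comRingType} (a q : C) (n : nat) : C :=
  \prod_(k < n) (1 - a * q ^+ k).

(* Formal power series in two variables x,y over C, as coefficient arrays:
   F r s is the coefficient of x^r y^s. *)
Definition fps (C : Type) := nat -> nat -> C.

Definition fps_add {C : comRingType} (F G : fps C) : fps C :=
  fun r s => F r s + G r s.
Definition fps_sub {C : comRingType} (F G : fps C) : fps C :=
  fun r s => F r s - G r s.
Definition fps_scale {C : comRingType} (c : C) (F : fps C) : fps C :=
  fun r s => c * F r s.
Definition fps_mulX {C : comRingType} (F : fps C) : fps C :=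
  fun r s => if r is r'.+1 then F r' s else 0.
Definition fps_mulY {C : comRingType} (F : fps C) : fps C :=
  fun r s => if s is s'.+1 then F r s' else 0.

(* H6(alpha;beta;q, cx*x, cy*y) as a formal power series in x, y:
   coefficient of x^r y^s is (alpha;q)_{2r+s} / ((beta;q)_{r+s} (q;q)_r (q;q)_s) cx^r cy^s.
   So H6(alpha;beta;q,x,y) = H6 alpha beta q 1 1 and H6(..;q,xq,y) = H6 .. q q 1. *)
Definition H6 {C : fieldType} (alpha beta q cx cy : C) : fps C :=
  fun r s => qpoch alpha q (2 * r + s) /
             (qpoch beta q (r + s) * qpoch q q r * qpoch q q s)
             * cx ^+ r * cy ^+ s.

From HB Require Import structures.
From mathcomp Require Import all_boot all_order all_algebra.
From mathcomp Require Import complex reals ring.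
From Stdlib Require Import FunctionalExtensionality.
Set Implicit Arguments. Unset Strict Implicit. Unset Printing Implicit Defensive.
Import Order.TTheory GRing.Theory Num.Theory.
Local Open Scope ring_scope.
Local Open Scope complex_scope.

(* Compare coefficients of x^r y^s.  Peeling the first or the last factor
   off the q-Pochhammer symbols writes every coefficient occurring in the four
   identities as an explicit rational function of alpha, beta, q, q^r, q^s
   times a single coefficient: that of H6(alpha q^2; beta q^2) at (r - 1, s)
   when r > 0, and that of H6(alpha q; beta q^2) at (0, s - 1) when r = 0
   and s > 0 (the constant terms are all 1).  Each identity thus becomes an identity of rational functions.  The
   hypotheses |q| < 1 and beta <> q^-n only serve to make the factors
   1 - q^(n+1) and 1 - beta q^n, by which we divide, nonzero. *)

Lemma fps_ext (C : Type) (F G : fps C) : (forall r s, F r s = G r s) -> F = G.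
Proof. by move=> FG; do 2!apply: functional_extensionality => ?. Qed.

Lemma onesub_exprS_neq0 (F : numDomainType) (x : F) n :
  `|x| < 1 -> 1 - x * x ^+ n != 0.
Proof.
move=> x_lt1; rewrite -exprS subr_eq0; apply/eqP => /(congr1 Num.norm).
rewrite normr1 normrX => norm_eq1.
by have := exprn_ilt1 n.+1 (normr_ge0 x) x_lt1; rewrite -norm_eq1 ltxx.
Qed.

Lemma onesub_mul_expr_neq0 (F : fieldType) (q b : F) n :
  q != 0 -> b != q ^- n -> 1 - b * q ^+ n != 0.
Proof.
move=> q_neq0; apply: contraNN; rewrite subr_eq0 eq_sym => /eqP bqn_eq1.
by rewrite -[b](mulfK (expf_neq0 n q_neq0)) bqn_eq1 div1r.
Qed.

Section QPochhammer.
Variable C : comNzRingType.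
Implicit Types a q : C.

Lemma qpoch0 a q : qpoch a q 0 = 1.
Proof. by rewrite /qpoch big_ord0. Qed.

Lemma qpochS a q n : qpoch a q n.+1 = (1 - a) * qpoch (a * q) q n.
Proof.
rewrite /qpoch big_ord_recl expr0 mulr1; congr (_ * _).
by apply: eq_bigr => i _; rewrite exprS mulrA.
Qed.

Lemma qpochSr a q n : qpoch a q n.+1 = qpoch a q n * (1 - a * q ^+ n).
Proof. by rewrite /qpoch big_ord_recr. Qed.

Lemma mulr_qq a q : a * q * q = a * q ^+ 2.
Proof. by rewrite -mulrA -expr2. Qed.

Lemma expr2nD (x : C) r s : x ^+ (2 * r + s) = x ^+ r * x ^+ r * x ^+ s.
Proof. by rewrite exprD mul2n -addnn exprD. Qed.

End QPochhammer.

Section Contiguity.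
Variables (C : fieldType) (q a b : C).
Hypothesis q_regular : forall n, 1 - q * q ^+ n != 0.
Hypothesis b_regular : forall n, 1 - b * q ^+ n != 0.

Lemma qpoch_neq0 c n : (forall k, 1 - c * q ^+ k != 0) -> qpoch c q n != 0.
Proof. by move=> hc; apply/prodf_neq0 => i _. Qed.

Lemma qpoch_q_neq0 n : qpoch q q n != 0.
Proof. exact: qpoch_neq0. Qed.

Lemma b_regular0 : 1 - b != 0.
Proof. by have := b_regular 0; rewrite mulr1. Qed.

Lemma b_regular1 : 1 - b * q != 0.
Proof. exact: (b_regular 1). Qed.

Lemma b_regular_rs r s : 1 - b * q * (q ^+ r * q ^+ s) != 0.
Proof. by rewrite -exprD -mulrA -exprS. Qed.

Lemma qpoch_b_neq0 k n : qpoch (b * q ^+ k) q n != 0.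
Proof. by apply: qpoch_neq0 => i; rewrite -mulrA -exprD. Qed.

Lemma qpoch_bq n : qpoch (b * q) q n =
  (1 - b * q) * qpoch (b * q ^+ 2) q n / (1 - b * q * q ^+ n).
Proof. by rewrite -mulr_qq -qpochS qpochSr mulfK // -mulrA -exprS. Qed.

Let neq0E :=
  (qpoch_q_neq0, qpoch_b_neq0, q_regular, b_regular0, b_regular1, b_regular_rs).

Lemma H6_00 cx cy : H6 a b q cx cy 0 0 = 1.
Proof. by rewrite /H6 muln0 !qpoch0 !expr0 !mulr1 divr1. Qed.

Lemma H6E cx cy r s : H6 a b q cx cy r s = H6 a b q 1 1 r s * cx ^+ r * cy ^+ s.
Proof. by rewrite /H6 !expr1n !mulr1. Qed.

Lemma H6_shift_Sx r s : H6 (a * q) (b * q) q 1 1 r.+1 s =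
  (1 - a * q) * (1 - a * q ^+ 2 * (q ^+ r * q ^+ r * q ^+ s))
    / ((1 - b * q) * (1 - q * q ^+ r))
  * H6 (a * q ^+ 2) (b * q ^+ 2) q 1 1 r s.
Proof.
rewrite /H6 !expr1n !mulr1 mulnS -addnA add2n addSn.
rewrite qpochS qpochSr (mulr_qq a) qpochS (mulr_qq b) qpochSr expr2nD.
by field; rewrite !neq0E.
Qed.

Lemma H6_Sx r s : H6 a b q 1 1 r.+1 s =
  (1 - a) * (1 - a * q) * (1 - b * q * (q ^+ r * q ^+ s))
    / ((1 - b) * (1 - b * q) * (1 - q * q ^+ r))
  * H6 (a * q ^+ 2) (b * q ^+ 2) q 1 1 r s.
Proof.
rewrite /H6 !expr1n !mulr1 mulnS -addnA add2n addSn.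
rewrite 2!qpochS (mulr_qq a) qpochS qpoch_bq qpochSr exprD.
by field; rewrite !neq0E.
Qed.

Lemma H6_shift_Sy r s : H6 (a * q) (b * q) q 1 1 r s.+1 =
  (1 - a * q * (q ^+ r * q ^+ r * q ^+ s)) / ((1 - b * q) * (1 - q * q ^+ s))
  * H6 (a * q) (b * q ^+ 2) q 1 1 r s.
Proof.
rewrite /H6 !expr1n !mulr1 !addnS.
rewrite qpochSr qpochS (mulr_qq b) qpochSr expr2nD.
by field; rewrite !neq0E.
Qed.

Lemma H6_Sy r s : H6 a b q 1 1 r s.+1 =
  (1 - a) * (1 - b * q * (q ^+ r * q ^+ s))
    / ((1 - b) * (1 - b * q) * (1 - q * q ^+ s))
  * H6 (a * q) (b * q ^+ 2) q 1 1 r s.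
Proof.
rewrite /H6 !expr1n !mulr1 !addnS.
rewrite 2!qpochS qpoch_bq qpochSr exprD.
by field; rewrite !neq0E.
Qed.

Lemma H6_shift_Sx_Sy r s : H6 (a * q) (b * q ^+ 2) q 1 1 r.+1 s =
  (1 - a * q) * (1 - q * q ^+ s) / (1 - q * q ^+ r)
  * H6 (a * q ^+ 2) (b * q ^+ 2) q 1 1 r s.+1.
Proof.
rewrite /H6 !expr1n !mulr1 mulnS -addnA add2n addSn !addnS.
rewrite qpochS (mulr_qq a) (qpochSr q q r) (qpochSr q q s).
by field; rewrite !neq0E.
Qed.

End Contiguity.



Theorem theorem2p7 (R : realType) (q alpha beta : R[i])
  (hq0 : 0 < `|q|) (hq1 : `|q| < 1)
  (hbeta : forall n : nat, beta != q ^- n) :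
  let P := (1 - beta) * (1 - beta * q) in
  let H := H6 alpha beta q 1 1 in
  let LHS := H6 (alpha * q) (beta * q) q 1 1 in
  [/\
  (* (i) *)
   LHS = fps_add (fps_add (fps_add H
     (fps_scale ((alpha - beta) * (1 - alpha * q) / P)
        (fps_mulX (H6 (alpha * q ^+ 2) (beta * q ^+ 2) q 1 1))))
     (fps_scale ((alpha - beta) / P)
        (fps_mulY (H6 (alpha * q) (beta * q ^+ 2) q q 1))))
     (fps_scale (alpha * q * (1 - alpha * q) / (1 - beta * q))
        (fps_mulX (H6 (alpha * q ^+ 2) (beta * q ^+ 2) q q q))),
  (* (ii) *)
   LHS = fps_sub (fps_sub (fps_add (fps_add (fps_add H
     (fps_scale (alpha / P)
        (fps_mulY (H6 (alpha * q) (beta * q ^+ 2) q 1 1))))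
     (fps_scale (alpha * q * (1 - alpha * q) / (1 - beta * q))
        (fps_mulX (H6 (alpha * q ^+ 2) (beta * q ^+ 2) q q q))))
     (fps_scale (alpha * (1 - alpha * q) / P)
        (fps_mulX (H6 (alpha * q ^+ 2) (beta * q ^+ 2) q 1 q))))
     (fps_scale (beta * (1 - alpha * q) / P)
        (fps_mulX (H6 (alpha * q ^+ 2) (beta * q ^+ 2) q 1 1))))
     (fps_scale (beta / P)
        (fps_mulY (H6 (alpha * q) (beta * q ^+ 2) q q 1))),
  (* (iii) *)
   LHS = fps_sub (fps_sub (fps_add (fps_add (fps_add H
     (fps_scale (alpha * (1 - alpha * q) / P)
        (fps_mulX (H6 (alpha * q ^+ 2) (beta * q ^+ 2) q 1 1))))
     (fps_scale (alpha / P)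
        (fps_mulY (H6 (alpha * q) (beta * q ^+ 2) q q 1))))
     (fps_scale (alpha * q * (1 - alpha * q) / (1 - beta * q))
        (fps_mulX (H6 (alpha * q ^+ 2) (beta * q ^+ 2) q q q))))
     (fps_scale (beta / P)
        (fps_mulY (H6 (alpha * q) (beta * q ^+ 2) q 1 1))))
     (fps_scale (beta * (1 - alpha * q) / P)
        (fps_mulX (H6 (alpha * q ^+ 2) (beta * q ^+ 2) q 1 q)))
  &
  (* (iv) *)
   LHS = fps_add (fps_add (fps_add H
     (fps_scale ((alpha - beta) / P)
        (fps_mulY (H6 (alpha * q) (beta * q ^+ 2) q 1 1))))
     (fps_scale ((alpha - beta) * (1 - alpha * q) / P)
        (fps_mulX (H6 (alpha * q ^+ 2) (beta * q ^+ 2) q 1 q))))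
     (fps_scale (alpha * q * (1 - alpha * q) / (1 - beta * q))
        (fps_mulX (H6 (alpha * q ^+ 2) (beta * q ^+ 2) q q q)))].
Proof.
have q_neq0 : q != 0 by rewrite -normr_gt0.
have q_reg n : 1 - q * q ^+ n != 0 := onesub_exprS_neq0 n hq1.
have b_reg n : 1 - beta * q ^+ n != 0 := onesub_mul_expr_neq0 q_neq0 (hbeta n).
have neq0E := (q_reg, b_regular0 b_reg, b_regular1 b_reg, b_regular_rs b_reg).
move=> P H LHS; rewrite {}/P {}/H {}/LHS.
split; apply: fps_ext => -[|r] [|s];
  rewrite /fps_add /fps_sub /fps_scale /fps_mulX /fps_mulY ?H6_00;
  rewrite ?(H6E q _ _ q q) ?(H6E q _ _ q 1) ?(H6E q _ _ 1 q);
  (* at (r+1, s+1) the x-lemmas must fire first, to reach the common kernel *)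
  rewrite ?(H6_shift_Sx _ q_reg b_reg) ?(H6_Sx _ q_reg b_reg);
  rewrite ?(H6_shift_Sx_Sy _ q_reg b_reg);
  rewrite ?(H6_shift_Sy _ q_reg b_reg) ?(H6_Sy _ q_reg b_reg);
  rewrite ?expr1n ?(exprS q r) ?(exprS q s);
  by field; rewrite !neq0E.
Qed.
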